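(* The Markov spectrum of $\mathbb{Q}((1/T))$ is $\mathcal{M}=\{1,2,3,\dots\}\cup\{\infty\}$.
   Context: $\mathbb{Q}((1/T))$ is the field of formal Laurent series $\sum_{i=-\infty}^m a_iT^i$ with $a_i\in\mathbb{Q}$. For nonzero $\alpha$ with leading term $a_mT^m$, $a_m\ne0$, set $\deg\alpha=m$, and $\deg0=-\infty$. A binary quadratic form over $\mathbb{Q}((1/T))$ is $Q(X,Y)=AX^2+BXY+CY^2$ with $A,B,C\in\mathbb{Q}((1/T))$ not all in $\mathbb{Q}(T)$; its discriminant is $D=B^2-4AC$. It is indefinite if $D\neq0$ and $D$ is a square in $\mathbb{Q}((1/T))$. Put $m(Q)=\inf\{\deg Q(X,Y): X,Y\in\mathbb{Q}[T],\ (X,Y)\ne(0,0)\}\in\mathbb{Z}\cup\{-\infty\}$. The Markov spectrum is $\mathcal{M}=\{\tfrac{\deg D}{2}-m(Q): Q \text{ an indefinite binary quadratic form}\}$, where the value is $+\infty$ when $m(Q)=-\infty$. *)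

From HB Require Import structures.
From mathcomp Require Import all_boot all_order all_algebra.
Set Implicit Arguments. Unset Strict Implicit. Unset Printing Implicit Defensive.
Import Order.TTheory GRing.Theory Num.Theory.
Local Open Scope ring_scope.

(* A formal Laurent series sum_{i <= bnd} coef i T^i over Q, with an explicit
   upper bound on the support. Equality of series is [eqLS] (coefficientwise). *)
Record LS := mkLS {
  coef : int -> rat;
  bnd : int;
  bndP : forall i : int, bnd < i -> coef i = 0 }.

Definition eqLS (x y : LS) : Prop := forall i, coef x i = coef y i.

Program Definition LSadd (a b : LS) : LS :=
  @mkLS (fun i => coef a i + coef b i) (Num.max (bnd a) (bnd b)) _.
Next Obligation.
move=> a b i /=; rewrite gt_max => /andP[ha hb].
by rewrite (bndP ha) (bndP hb) addr0.
Qed.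

Program Definition LSopp (a : LS) : LS := @mkLS (fun i => - coef a i) (bnd a) _.
Next Obligation. by move=> a i H /=; rewrite (bndP H) oppr0. Qed.

Program Definition LSscale (c : rat) (a : LS) : LS :=
  @mkLS (fun i => c * coef a i) (bnd a) _.
Next Obligation. by move=> c a i H /=; rewrite (bndP H) mulr0. Qed.

(* Cauchy product: coefficient n is sum over i + j = n with i <= bnd a, j <= bnd b. *)
Program Definition LSmul (a b : LS) : LS :=
  @mkLS (fun n => if n <= bnd a + bnd b then
           \sum_(k < (absz (bnd a + bnd b - n)%R).+1)
              coef a (bnd a - k%:Z) * coef b (n - bnd a + k%:Z)
         else 0) (bnd a + bnd b) _.
Next Obligation. by move=> a b i H /=; rewrite leNgt H. Qed.

Program Definition ofpoly (p : {poly rat}) : LS :=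
  @mkLS (fun i => match i with Posz n => p`_n | Negz _ => 0 end) (size p)%:Z _.
Next Obligation.
move=> p i H /=; case: i H => // n; rewrite ltz_nat => H.
by rewrite nth_default // ltnW.
Qed.

Definition in_QT (a : LS) : Prop :=
  exists q p : {poly rat}, q != 0 /\ eqLS (LSmul (ofpoly q) a) (ofpoly p).

(* is_deg a d : the degree of a is d, with None standing for -infinity. *)
Definition is_deg (a : LS) (d : option int) : Prop :=
  match d with
  | None => forall i, coef a i = 0
  | Some m => coef a m != 0 /\ forall i, m < i -> coef a i = 0
  end.

Definition qval (A B C : LS) (X Y : {poly rat}) : LS :=
  LSadd (LSadd (LSmul A (LSmul (ofpoly X) (ofpoly X)))
               (LSmul B (LSmul (ofpoly X) (ofpoly Y))))
        (LSmul C (LSmul (ofpoly Y) (ofpoly Y))).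

Definition disc (A B C : LS) : LS :=
  LSadd (LSmul B B) (LSopp (LSscale 4 (LSmul A C))).

(* binary quadratic form over Q((1/T)): not all of A, B, C in Q(T) *)
Definition is_form (A B C : LS) : Prop := ~ (in_QT A /\ in_QT B /\ in_QT C).

Definition indefinite (A B C : LS) : Prop :=
  (exists i, coef (disc A B C) i != 0) /\
  exists s : LS, eqLS (LSmul s s) (disc A B C).

(* markov_value A B C v : deg D / 2 - m(Q) = v, where v = None means +infinity
   (i.e. m(Q) = -infinity) and m(Q) is the infimum in Z u {-oo} of
   deg Q(X,Y) over (X,Y) <> (0,0) in Q[T]^2. *)
Definition markov_value (A B C : LS) (v : option rat) : Prop :=
  match v with
  | None => forall k : int, exists X Y : {poly rat}, (X != 0 \/ Y != 0) /\
              forall i, k <= i -> coef (qval A B C X Y) i = 0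
  | Some r => exists dD m : int,
      is_deg (disc A B C) (Some dD) /\
      r = dD%:~R / 2 - m%:~R /\
      (exists X Y : {poly rat}, (X != 0 \/ Y != 0) /\ is_deg (qval A B C X Y) (Some m)) /\
      (forall X Y : {poly rat}, (X != 0 \/ Y != 0) ->
          exists d : int, is_deg (qval A B C X Y) (Some d) /\ m <= d)
  end.

Definition markov_spectrum (v : option rat) : Prop :=
  exists A B C : LS, is_form A B C /\ indefinite A B C /\ markov_value A B C v.

(* A form Q = AX^2 + BXY + CY^2 whose discriminant is a square s^2 factors as
   4A Q(X, Y) = (2AX + (B - s)Y) (2AX + (B + s)Y).  By the box principle (a nonzero
   vector in the kernel of a linear system with more unknowns than equations) there
   are polynomials X, Y, not both zero, with deg Y < N and
   deg (2AX + (B - s)Y) <= deg A - N; for N > |deg A - deg s| the second factor has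
   degree at most deg s + N - 1, so deg Q(X, Y) <= deg s - 1 = deg D / 2 - 1.  Hence
   every finite value deg D / 2 - m(Q) is a positive integer.

   Conversely let s_n be the square root of c_n = T^(2n) - 1 in Q((1/T)), of degree n.
   It is not in Q(T), since X^2 = c_n Y^2 forces Y = 0 (evaluate at T = 0, where
   c_n = -1, and descend).  The form s_n X^2 - s_n c_n Y^2 = s_n (X^2 - c_n Y^2) has
   discriminant (2 c_n)^2, of degree 4n, and minimum n, attained at (1, 0); so it has
   Markov value n.  Finally XY + s_1 Y^2 vanishes at (1, 0), giving the value infinity. *)

From mathcomp Require Import all_boot all_order all_algebra.
From mathcomp Require Import zify ring lra.
Set Implicit Arguments. Unset Strict Implicit. Unset Printing Implicit Defensive.
Import Order.TTheory GRing.Theory Num.Theory.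
Local Open Scope ring_scope.

Lemma coef_LSadd a b n : coef (LSadd a b) n = coef a n + coef b n.
Proof. by []. Qed.

Lemma coef_LSopp a n : coef (LSopp a) n = - coef a n.
Proof. by []. Qed.

Lemma coef_LSscale c a n : coef (LSscale c a) n = c * coef a n.
Proof. by []. Qed.

Lemma coef_ofpoly_nat (p : {poly rat}) (k : nat) : coef (ofpoly p) k%:Z = p`_k.
Proof. by []. Qed.

Lemma coef_ofpoly_neg (p : {poly rat}) i : i < 0 -> coef (ofpoly p) i = 0.
Proof. by case: i. Qed.

Lemma coef_ofpoly0 i : coef (ofpoly 0) i = 0.
Proof. by case: i => [n|n] //=; rewrite coef0. Qed.

Lemma ofpoly_inj (p q : {poly rat}) : eqLS (ofpoly p) (ofpoly q) -> p = q.
Proof. by move=> E; apply/polyP => k; exact: (E k%:Z). Qed.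

Definition vanish_above (a : LS) (N : int) := forall i, N < i -> coef a i = 0.

Lemma vanish_above_bnd a : vanish_above a (bnd a).
Proof. by move=> i; apply: bndP. Qed.

Lemma vanish_above_le a N M : vanish_above a N -> N <= M -> vanish_above a M.
Proof. by move=> Ha NM i Hi; apply: Ha; apply: le_lt_trans Hi. Qed.

Lemma vanish_above_ofpoly (p : {poly rat}) (L : nat) :
  (size p <= L)%N -> vanish_above (ofpoly p) (L%:Z - 1).
Proof.
move=> Hp [k|//] Hk; rewrite /= nth_default //.
by apply: leq_trans Hp _; lia.
Qed.

Section WindowSums.

Variables (h : int -> rat) (lo hi : int).
Hypothesis h_lo : forall i, i < lo -> h i = 0.
Hypothesis h_hi : forall i, hi < i -> h i = 0.

Lemma window_sum_tail U (L0 L : nat) : (L0 <= L)%N -> U - L0%:Z < lo ->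
  \sum_(k < L) h (U - k%:Z) = \sum_(k < L0) h (U - k%:Z).
Proof.
move=> le_L0L HL0; rewrite -(subnKC le_L0L).
elim: (L - L0)%N => [|d IH]; first by rewrite addn0.
by rewrite addnS big_ord_recr /= IH h_lo ?addr0 //; lia.
Qed.

Lemma window_sum_canon U (L : nat) : lo <= hi + 1 -> hi <= U -> U - L%:Z < lo ->
  \sum_(k < L) h (U - k%:Z) = \sum_(k < absz (hi + 1 - lo)%R) h (hi - k%:Z).
Proof.
move=> Hlh; have [d Hd] : exists d : nat, d = absz (U - hi) by eexists.
elim: d U L Hd => [|d IH] U L Hd HU HL.
  have -> : U = hi by lia.
  by apply: window_sum_tail; lia.
case: L HL => [|L] HL; first lia.
rewrite big_ord_recl /= h_hi ?add0r; last lia.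
rewrite -(IH (U - 1) L); try lia.
by apply: eq_bigr => k _; congr h; rewrite /bump /=; lia.
Qed.

Lemma window_sum_eq U1 U2 (L1 L2 : nat) :
  hi <= U1 -> U1 - L1%:Z < lo -> hi <= U2 -> U2 - L2%:Z < lo ->
  \sum_(k < L1) h (U1 - k%:Z) = \sum_(k < L2) h (U2 - k%:Z).
Proof.
move=> HU1 HL1 HU2 HL2; have [Hlh|Hhl] := lerP lo (hi + 1).
  by rewrite !window_sum_canon.
have h0 i : h i = 0 by have [/h_lo|Hi] := ltrP i lo; last (apply: h_hi; lia).
by rewrite !big1 // => k _; rewrite h0.
Qed.

End WindowSums.

Lemma coef_LSmul a b n lo hi U (L : nat) :
  (forall i, i < lo -> coef a i * coef b (n - i) = 0) ->
  (forall i, hi < i -> coef a i * coef b (n - i) = 0) ->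
  hi <= U -> U - L%:Z < lo ->
  coef (LSmul a b) n = \sum_(k < L) coef a (U - k%:Z) * coef b (n - (U - k%:Z)).
Proof.
pose h i := coef a i * coef b (n - i).
move=> Hlo Hhi HU HL; rewrite /LSmul /=; case: ifP => Hn; last first.
  rewrite big1 // => k _; have [Hk|Hk] := lerP (U - k%:Z) (bnd a).
    by rewrite (@bndP b) ?mulr0 //; lia.
  by rewrite bndP ?mul0r.
transitivity (\sum_(k < (absz (bnd a + bnd b - n)%R).+1) h (bnd a - k%:Z)).
  by apply: eq_bigr => k _; rewrite /h; congr (_ * coef b _); lia.
apply: (@window_sum_eq h (Num.max lo (n - bnd b)) (Num.min hi (bnd a))).
- move=> i; rewrite lt_max => /orP [Hi|Hi]; first exact: Hlo.
  by rewrite /h (@bndP b) ?mulr0 //; lia.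
- move=> i; rewrite gt_min => /orP [Hi|Hi]; first exact: Hhi.
  by rewrite /h bndP ?mul0r.
- by rewrite ge_min lexx orbT.
- by rewrite lt_max; apply/orP; right; lia.
- by rewrite ge_min HU.
- by rewrite lt_max HL.
Qed.

Lemma coef_LSmul_top_window a b N M (j : nat) :
  vanish_above a N -> vanish_above b M ->
  coef (LSmul a b) (N + M - j%:Z) =
  \sum_(i < j.+1) coef a (N - i%:Z) * coef b (M - (j%:Z - i%:Z)).
Proof.
move=> Ha Hb; rewrite (@coef_LSmul _ _ _ (N - j%:Z) N N j.+1) //.
- by apply: eq_bigr => i _; congr (_ * coef b _); lia.
- by move=> i Hi; rewrite Hb ?mulr0 //; lia.
- by move=> i Hi; rewrite Ha ?mul0r.
- lia.
Qed.

Lemma coef_LSmul_top a b N M : vanish_above a N -> vanish_above b M ->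
  coef (LSmul a b) (N + M) = coef a N * coef b M.
Proof.
move=> Ha Hb; have := coef_LSmul_top_window 0 Ha Hb.
by rewrite subr0 big_ord1 => ->; rewrite !subr0.
Qed.

Lemma vanish_above_LSmul a b N M : vanish_above a N -> vanish_above b M ->
  vanish_above (LSmul a b) (N + M).
Proof.
move=> Ha Hb n Hn; rewrite (@coef_LSmul _ _ _ (N + 1) N N 0) ?big_ord0 //.
- by move=> i Hi; rewrite Hb ?mulr0 //; lia.
- by move=> i Hi; rewrite Ha ?mul0r.
- lia.
Qed.

Lemma coef_LSmul_ofpolyr a (X : {poly rat}) n (L : nat) : (size X <= L)%N ->
  coef (LSmul a (ofpoly X)) n = \sum_(k < L) coef a (n - k%:Z) * X`_k.
Proof.
move=> HL; rewrite (@coef_LSmul _ _ _ (n - L%:Z + 1) n n L).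
- by apply: eq_bigr => k _; congr (_ * _); rewrite opprB addrC subrK.
- move=> i Hi; have [k Hk] : exists k : nat, n - i = k%:Z by exists (absz (n - i)); lia.
  by rewrite Hk /= nth_default ?mulr0 //; apply: leq_trans HL _; lia.
- by move=> i Hi; rewrite coef_ofpoly_neg ?mulr0 //; lia.
- by [].
- lia.
Qed.

Lemma LSmul_ofpoly (p q : {poly rat}) :
  eqLS (LSmul (ofpoly p) (ofpoly q)) (ofpoly (p * q)).
Proof.
move=> i; apply: esym; case: i => [m|m]; last first.
  rewrite coef_ofpoly_neg // (@coef_LSmul _ _ _ 0 (-1) (-1) 0) ?big_ord0 //.
  - by move=> i Hi; rewrite coef_ofpoly_neg ?mul0r.
  - by move=> i Hi; rewrite (@coef_ofpoly_neg q) ?mulr0 // NegzE; lia.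
rewrite [LHS]/= coefMr (@coef_LSmul _ _ _ 0 m m m.+1) //; last lia.
- apply: eq_bigr => i _; have Hi : (i <= m)%N by rewrite -ltnS.
  by rewrite (subzn Hi) (_ : m%:Z - (m - i)%N%:Z = i) //; lia.
- by move=> i Hi; rewrite coef_ofpoly_neg ?mul0r.
- by move=> i Hi; rewrite (@coef_ofpoly_neg q) ?mulr0 //; lia.
Qed.

Lemma LSsub_ofpoly (p q : {poly rat}) :
  eqLS (LSadd (ofpoly p) (LSopp (ofpoly q))) (ofpoly (p - q)).
Proof. by case=> [n|n] /=; rewrite ?coefB ?oppr0 ?addr0. Qed.

Lemma coef_LSmul0l a b : (forall i, coef a i = 0) -> forall n, coef (LSmul a b) n = 0.
Proof. by move=> a0 n /=; case: ifP => // _; rewrite big1 // => i _; rewrite a0 mul0r. Qed.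

Lemma coef_LSmul0r a b : (forall i, coef b i = 0) -> forall n, coef (LSmul a b) n = 0.
Proof. by move=> b0 n /=; case: ifP => // _; rewrite big1 // => i _; rewrite b0 mulr0. Qed.

Lemma coef_qvalX0 A B C X n :
  coef (qval A B C X 0) n = coef (LSmul A (LSmul (ofpoly X) (ofpoly X))) n.
Proof.
have Y0 a b : forall m, coef (LSmul a (LSmul b (ofpoly 0))) m = 0.
  by apply: coef_LSmul0r; apply: coef_LSmul0r; apply: coef_ofpoly0.
by rewrite /qval !coef_LSadd !Y0 !addr0.
Qed.

Lemma LSmul_neq0 a b n : coef (LSmul a b) n != 0 ->
  (exists i, coef a i != 0) /\ (exists i, coef b i != 0).
Proof.
rewrite /=; case: ifP => [_ | _]; last by rewrite eqxx.
set L := (absz _).+1 => Hsum.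
have [/existsP [k] | /existsPn Hk] :=
  boolP [exists k : 'I_L, coef a (bnd a - k%:Z) * coef b (n - bnd a + k%:Z) != 0].
  by rewrite mulf_eq0 negb_or => /andP [Ha Hb]; split; eexists; [exact: Ha | exact: Hb].
by move: Hsum; rewrite big1 ?eqxx // => k _; apply/eqP/negPn/Hk.
Qed.

Lemma is_deg_exists a : (exists i, coef a i != 0) -> exists d, is_deg a (Some d).
Proof.
case=> i Hi.
have exP : exists k : nat, coef a (i + k%:Z) != 0 by exists 0%N; rewrite addr0.
have bdP k : coef a (i + k%:Z) != 0 -> (k <= absz (bnd a - i))%N.
  by have [|/bndP ->] := lerP (i + k%:Z) (bnd a); [lia | rewrite eqxx].
have [k Hk Hmax] := ex_maxnP exP bdP.
exists (i + k%:Z); split => // j Hj; apply/eqP; apply: contraT => Hnz.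
have [k' Hk'] : exists k' : nat, j = i + k'%:Z by exists (absz (j - i)); lia.
by have := Hmax k'; rewrite -Hk' => /(_ Hnz); lia.
Qed.

Lemma is_deg_uniq a d1 d2 : is_deg a (Some d1) -> is_deg a (Some d2) -> d1 = d2.
Proof.
move=> [H1 Z1] [H2 Z2]; case: (ltgtP d1 d2) => // H.
  by rewrite Z1 ?eqxx in H2.
by rewrite Z2 ?eqxx in H1.
Qed.

Lemma is_degM a b da db : is_deg a (Some da) -> is_deg b (Some db) ->
  is_deg (LSmul a b) (Some (da + db)).
Proof.
move=> [Ha Za] [Hb Zb]; split; last exact: vanish_above_LSmul.
by rewrite coef_LSmul_top // mulf_neq0.
Qed.

Lemma is_deg_eqLS a b d : eqLS a b -> is_deg a d -> is_deg b d.
Proof.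
move=> E; case: d => [d [Hd Zd] | Z]; last by move=> i; rewrite -E.
by split => [|i Hi]; rewrite -E //; apply: Zd.
Qed.

Lemma is_degZ c a d : c != 0 -> is_deg a (Some d) -> is_deg (LSscale c a) (Some d).
Proof.
move=> c0 [ad Za]; split => [|i Hi]; rewrite coef_LSscale; first exact: mulf_neq0.
by rewrite Za ?mulr0.
Qed.

Lemma is_deg_ofpoly (p : {poly rat}) : p != 0 -> is_deg (ofpoly p) (Some (size p).-1%:Z).
Proof.
move=> Hp; split; first by rewrite /= -lead_coefE lead_coef_eq0.
apply: vanish_above_le (vanish_above_ofpoly (leqnn _)) _.
by move: Hp; rewrite -size_poly_gt0; lia.
Qed.

(** * Identities through truncations *)

Lemma dvdXnP (R : fieldType) (K : nat) (r : {poly R}) :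
  reflect (forall j, (j < K)%N -> r`_j = 0) ('X^K %| r).
Proof.
apply: (iffP (modp_eq0P _ _)); rewrite -Pdiv.IdomainMonic.take_poly_modp.
  by move=> r0 j Hj; have := congr1 (fun p : {poly R} => p`_j) r0; rewrite coef_take_poly Hj coef0.
by move=> r0; apply/polyP => j; rewrite coef_take_poly coef0; case: ifP => // /r0.
Qed.

(* In [LSrep N0 k K a p], ['X^j] stands for [T^(k N0 - j)]: products of series
   become products of polynomials modulo ['X^K], so identities of Laurent series
   reduce to ring identities.  Measuring bases in multiples of one [N0] makes the
   bases of both sides of an identity agree by computation. *)
Definition LSrep (N0 k K : nat) (a : LS) (p : {poly rat}) :=
  vanish_above a (k * N0)%N /\
  forall j : nat, (j < K)%N -> coef a ((k * N0)%N%:Z - j%:Z) = p`_j.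

Section Representation.

Variables N0 K : nat.

Lemma LSrep_exists k a : bnd a <= N0%:Z -> (0 < k)%N -> exists p, LSrep N0 k K a p.
Proof.
move=> Ha k0; exists (\poly_(j < K) coef a ((k * N0)%N%:Z - j%:Z)).
split => [|j Hj]; last by rewrite coef_poly Hj.
by move=> i Hi; apply: bndP; nia.
Qed.

Lemma LSrep0 k a : (forall i, coef a i = 0) -> LSrep N0 k K a 0.
Proof. by move=> a0; split => [i _ | j _]; rewrite a0 ?coef0. Qed.

Lemma LSrepD k a b p q : LSrep N0 k K a p -> LSrep N0 k K b q ->
  LSrep N0 k K (LSadd a b) (p + q).
Proof.
move=> [Ha Hp] [Hb Hq]; split => [i Hi | j Hj] /=; first by rewrite Ha ?Hb ?addr0.
by rewrite Hp ?Hq ?coefD.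
Qed.

Lemma LSrepN k a p : LSrep N0 k K a p -> LSrep N0 k K (LSopp a) (- p).
Proof.
move=> [Ha Hp]; split => [i Hi | j Hj] /=; first by rewrite Ha ?oppr0.
by rewrite Hp ?coefN.
Qed.

Lemma LSrepZ k c a p : LSrep N0 k K a p -> LSrep N0 k K (LSscale c a) (c *: p).
Proof.
move=> [Ha Hp]; split => [i Hi | j Hj] /=; first by rewrite Ha ?mulr0.
by rewrite Hp ?coefZ.
Qed.

Lemma LSrepM k l a b p q : LSrep N0 k K a p -> LSrep N0 l K b q ->
  LSrep N0 (k + l) K (LSmul a b) (p * q).
Proof.
move=> [Ha Hp] [Hb Hq]; rewrite /LSrep mulnDl PoszD; split; first exact: vanish_above_LSmul.
move=> j Hj; rewrite coef_LSmul_top_window // coefM.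
apply: eq_bigr => -[i /= Hi] _; have Hij : (i <= j)%N by rewrite -ltnS.
rewrite Hp ?(leq_ltn_trans Hij) // (subzn Hij) Hq //.
exact: leq_ltn_trans (leq_subr _ _) Hj.
Qed.

Lemma LSrep_eqLS k a b p : eqLS a b -> LSrep N0 k K a p -> LSrep N0 k K b p.
Proof.
by move=> E [Ha Hp]; split => [i Hi | j Hj]; rewrite -E; [apply: Ha | apply: Hp].
Qed.

Lemma LSrep_dvdp k a p q : LSrep N0 k K a p -> LSrep N0 k K a q -> 'X^K %| p - q.
Proof. by move=> [_ Hp] [_ Hq]; apply/dvdXnP => j Hj; rewrite coefB -Hp ?Hq ?subrr. Qed.

End Representation.

Arguments LSrepZ {N0 K k} c {a p}.

Lemma eqLS_LSrep N0 k a b :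
  (forall K, exists p q, [/\ LSrep N0 k K a p, LSrep N0 k K b q & 'X^K %| p - q]) ->
  eqLS a b.
Proof.
move=> H i; set N := (k * N0)%N%:Z.
have [p [q [[Ha Hp] [Hb Hq] /dvdXnP pq]]] := H (absz (N - i)).+1.
have [HiN|HiN] := lerP i N; last by rewrite Ha ?Hb.
have [j Hj] : exists j : nat, i = N - j%:Z by exists (absz (N - i)); lia.
have Hj' : (j < (absz (N - i)).+1)%N by lia.
by apply/eqP; rewrite Hj Hp ?Hq // -subr_eq0 -coefB pq.
Qed.

(** * Finite Markov values are positive integers *)

Lemma left_kernel_nontrivial (F : fieldType) m n (A : 'M[F]_(m, n)) :
  (n < m)%N -> exists2 w : 'rV_m, w != 0 & w *m A = 0.
Proof.
move=> Hnm; have : kermx A != 0.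
  by rewrite -mxrank_eq0 mxrank_ker; have := rank_leq_col A; lia.
have [/existsP [i Hi] _ | /existsPn H /eqP []] := boolP [exists i, row i (kermx A) != 0].
  by exists (row i (kermx A)); rewrite // -row_mul mulmx_ker row0.
by apply/row_matrixP => i; rewrite row0; apply/eqP; have := H i; rewrite negbK.
Qed.

(* The coefficients of [u X + v Y] between [T^(du - N2 + 1)] and [T^(V + N2 - 1)]
   are [N1 + N2 - 1] linear forms in the [N1 + N2] coefficients of [X] and [Y]. *)
Lemma dirichlet (u v : LS) (du V : int) (N2 : nat) :
  vanish_above u du -> vanish_above v V -> du <= V -> (0 < N2)%N ->
  exists X Y : {poly rat}, [/\ X != 0 \/ Y != 0, (size Y <= N2)%N &
    vanish_above (LSadd (LSmul u (ofpoly X)) (LSmul v (ofpoly Y))) (du - N2%:Z)].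
Proof.
move=> Hu Hv HdV HN2.
pose N1 := (absz (V - du) + N2)%N; pose R := (N1 + N2).-1.
pose top := V + N2%:Z - 1.
pose Mu := \matrix_(k < N1, r < R) coef u (top - r%:Z - k%:Z).
pose Mv := \matrix_(k < N2, r < R) coef v (top - r%:Z - k%:Z).
have HR : (R < N1 + N2)%N by rewrite /R; lia.
have [w w0 Hw] := left_kernel_nontrivial (col_mx Mu Mv) HR.
pose X := \poly_(k < N1) oapp (fun i : 'I_N1 => lsubmx w 0 i) 0 (insub k).
pose Y := \poly_(k < N2) oapp (fun i : 'I_N2 => rsubmx w 0 i) 0 (insub k).
have HX : (size X <= N1)%N by exact: size_poly.
have HY : (size Y <= N2)%N by exact: size_poly.
exists X, Y; split => //.
  have [X0 | ] := eqVneq X 0; [right; apply/eqP => Y0 | by left].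
  move: w0; rewrite -(hsubmxK w).
  have -> : lsubmx w = 0.
    apply/rowP => k; have := congr1 (fun p : {poly rat} => p`_k) X0.
    by rewrite coef_poly ltn_ord valK /= coef0 !mxE.
  have -> : rsubmx w = 0.
    apply/rowP => k; have := congr1 (fun p : {poly rat} => p`_k) Y0.
    by rewrite coef_poly ltn_ord valK /= coef0 !mxE.
  by rewrite row_mx0 eqxx.
move=> n Hn; rewrite coef_LSadd.
have [Hnt|Hnt] := lerP n top; last first.
  rewrite (vanish_above_LSmul Hu (vanish_above_ofpoly HX)) 1?addrC ?add0r; last lia.
  by rewrite (vanish_above_LSmul Hv (vanish_above_ofpoly HY)) //; lia.
have [r Hr] : exists r : nat, n = top - r%:Z by exists (absz (top - n)); lia.
have HrR : (r < R)%N by lia.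
have := congr1 (fun M : 'M[rat]_(1, R) => M 0 (Ordinal HrR)) Hw.
rewrite -{1}(hsubmxK w) mul_row_col !mxE => <-.
rewrite (coef_LSmul_ofpolyr _ _ HX) (coef_LSmul_ofpolyr _ _ HY) Hr.
by congr (_ + _); apply: eq_bigr => k _; rewrite !mxE coef_poly ltn_ord valK mulrC /= mxE.
Qed.

Definition linear_factor (A B s : LS) (X Y : {poly rat}) : LS :=
  LSadd (LSmul (LSscale 2 A) (ofpoly X)) (LSmul (LSadd B (LSopp s)) (ofpoly Y)).

(* [(2AX + (B - s)Y) (2AX + (B + s)Y) = (2AX + BY)^2 - s^2 Y^2 = 4A Q(X, Y)]. *)
Lemma linear_factor_mul A B C s X Y : eqLS (LSmul s s) (disc A B C) ->
  eqLS (LSmul (linear_factor A B s X Y)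
              (LSadd (linear_factor A B s X Y) (LSmul (LSscale 2 s) (ofpoly Y))))
       (LSscale 4 (LSmul A (qval A B C X Y))).
Proof.
move=> Hs.
pose N0 := (absz (bnd A) + absz (bnd B) + absz (bnd C) + absz (bnd s) + size X + size Y)%N.
have [bA bB bC bs] : [/\ bnd A <= N0, bnd B <= N0, bnd C <= N0 & bnd s <= N0].
  by rewrite /N0; split; lia.
have [bX bY] : bnd (ofpoly X) <= N0 /\ bnd (ofpoly Y) <= N0 by rewrite /N0 /=; split; lia.
apply: (@eqLS_LSrep N0 4) => K.
have [A' rA] := @LSrep_exists N0 K 1 A bA isT.
have [B' rB] := @LSrep_exists N0 K 1 B bB isT.
have [C' rC] := @LSrep_exists N0 K 1 C bC isT.
have [S rS] := @LSrep_exists N0 K 1 s bs isT.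
have [X' rX] := @LSrep_exists N0 K 1 _ bX isT.
have [Y' rY] := @LSrep_exists N0 K 1 _ bY isT.
have rL := LSrepD (LSrepM (LSrepZ 2 rA) rX) (LSrepM (LSrepD rB (LSrepN rS)) rY).
have rD := LSrepD (LSrepM rB rB) (LSrepN (LSrepZ 4 (LSrepM rA rC))).
have SD := LSrep_dvdp (LSrep_eqLS Hs (LSrepM rS rS)) rD.
do 2 eexists; split.
- exact: (LSrepM rL (LSrepD rL (LSrepM (LSrepZ 2 rS) rY))).
- exact: (LSrepZ 4 (LSrepM rA (LSrepD (LSrepD (LSrepM rA (LSrepM rX rX))
                      (LSrepM rB (LSrepM rX rY))) (LSrepM rC (LSrepM rY rY))))).
rewrite [X in _ %| X](_ : _ = - (Y' * Y') * (S * S - (B' * B' - 4 *: (A' * C')))).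
  exact: dvdp_mull.
by rewrite -!mul_polyC; ring.
Qed.

Lemma markov_value_posnat A B C r : indefinite A B C -> markov_value A B C (Some r) ->
  exists n : nat, (0 < n)%N /\ r = n%:R.
Proof.
move=> [[i0 Di0] [s Hs]] [dD [m [HdD [-> [_ Hmin]]]]].
have [dA [A_dA ZA]] : exists dA, is_deg A (Some dA).
  apply: is_deg_exists.
  have [d [[Hd _] _]] := Hmin 1 0 (or_introl (oner_neq0 _)).
  by move: Hd; rewrite coef_qvalX0 => /LSmul_neq0 [].
have [ds Hds] : exists ds, is_deg s (Some ds).
  by apply: is_deg_exists; move: Di0; rewrite -Hs => /LSmul_neq0 [].
have EdD := is_deg_uniq HdD (is_deg_eqLS Hs (is_degM Hds Hds)).
case: Hds => _ Zs.
pose V := Num.max dA (Num.max (bnd B) ds); pose N2 := (absz (dA - ds)).+1.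
have Zu : vanish_above (LSscale 2 A) dA by move=> i Hi /=; rewrite ZA ?mulr0.
have Zv : vanish_above (LSadd B (LSopp s)) V.
  move=> i Hi /=; rewrite (@bndP B) ?Zs ?oppr0 ?addr0 //.
    by apply: le_lt_trans Hi; rewrite /V !le_max lexx !orbT.
  by apply: le_lt_trans Hi; rewrite /V !le_max lexx !orbT.
have le_dAV : dA <= V by rewrite le_max lexx.
have [X [Y [XY0 HY ZL]]] := dirichlet Zu Zv le_dAV (ltn0Sn (absz (dA - ds))).
have ZM : vanish_above (LSadd (linear_factor A B s X Y) (LSmul (LSscale 2 s) (ofpoly Y)))
                        (ds + (N2%:Z - 1)).
  move=> i Hi; rewrite coef_LSadd ZL; last by rewrite /N2 in Hi *; lia.
  rewrite (@vanish_above_LSmul _ _ ds _ _ (vanish_above_ofpoly HY)) ?addr0 //.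
  by move=> j Hj /=; rewrite Zs ?mulr0.
have [d [[Qd ZQ] le_md]] := Hmin X Y XY0.
have le_dds : d <= ds - 1.
  have : coef (LSscale 4 (LSmul A (qval A B C X Y))) (dA + d) != 0.
    by rewrite coef_LSscale coef_LSmul_top // !mulf_neq0.
  rewrite -(linear_factor_mul X Y Hs); apply: contraR; rewrite -ltNge => lt_dds.
  by rewrite (vanish_above_LSmul ZL ZM) //; lia.
exists (absz (ds - m)); split; first lia.
by rewrite EdD natr_absz ger0_norm ?intrD ?intrB; [field | lia].
Qed.

(** * Square roots *)

(* [sqrt_coefs g k] lists the first [k + 1] coefficients of the square root of the
   power series [1 + g 1 x + g 2 x^2 + ...]. *)
Fixpoint sqrt_coefs (g : nat -> rat) (k : nat) : seq rat :=
  if k is k'.+1 then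
    let s := sqrt_coefs g k' in
    rcons s ((g k'.+1 - \sum_(i < k') s`_i.+1 * s`_(k'.+1 - i.+1)) / 2)
  else [:: 1].

Definition sqrt_coef g j := (sqrt_coefs g j)`_j.

Lemma size_sqrt_coefs g k : size (sqrt_coefs g k) = k.+1.
Proof. by elim: k => //= k IH; rewrite size_rcons IH. Qed.

Lemma nth_sqrt_coefs g k i : (i <= k)%N -> (sqrt_coefs g k)`_i = sqrt_coef g i.
Proof.
elim: k => [|k IH] Hi; first by case: i Hi.
have [lt_ik|le_ki] := ltnP i k.+1; first by rewrite /= nth_rcons size_sqrt_coefs lt_ik IH.
by have -> : i = k.+1 by lia.
Qed.

Lemma sqrt_coefS g k :
  sqrt_coef g k.+1 = (g k.+1 - \sum_(i < k) sqrt_coef g i.+1 * sqrt_coef g (k.+1 - i.+1)) / 2.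
Proof.
rewrite {1}/sqrt_coef /= nth_rcons size_sqrt_coefs ltnn eqxx; congr ((_ - _) / 2).
by apply: eq_bigr => i _; rewrite !nth_sqrt_coefs //; have := ltn_ord i; lia.
Qed.

Lemma sqrt_coef_sqr g : g 0%N = 1 ->
  forall k, \sum_(i < k.+1) sqrt_coef g i * sqrt_coef g (k - i) = g k.
Proof.
move=> g0 [|k]; first by rewrite big_ord1 /sqrt_coef /= mulr1.
rewrite big_ord_recl big_ord_recr /= subnn subn0 sqrt_coefS.
have -> : sqrt_coef g 0 = 1 by [].
set S := \sum_(i < k) _.
have -> : S = \sum_(i < k) sqrt_coef g i.+1 * sqrt_coef g (k.+1 - i.+1) by apply: eq_bigr.
by field.
Qed.

Program Definition LSsqrt (a : LS) (n : int) : LS :=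
  @mkLS (fun z => if z <= n then sqrt_coef (fun j => coef a (n + n - j%:Z)) (absz (n - z))
                  else 0) n _.
Next Obligation. by rewrite leNgt H. Qed.

Lemma is_deg_LSsqrt a n : is_deg (LSsqrt a n) (Some n).
Proof. by split; [rewrite /= lexx subrr | exact: (@vanish_above_bnd (LSsqrt a n))]. Qed.

Lemma sqr_LSsqrt a n : vanish_above a (n + n) -> coef a (n + n) = 1 ->
  eqLS (LSmul (LSsqrt a n) (LSsqrt a n)) a.
Proof.
move=> Za a1 z; have [Hz|Hz] := lerP z (n + n); last first.
  have Zs := @vanish_above_bnd (LSsqrt a n).
  by rewrite Za // (vanish_above_LSmul Zs Zs).
have [j ->] : exists j : nat, z = n + n - j%:Z by exists (absz (n + n - z)%R); lia.
rewrite coef_LSmul_top_window; try exact: (@vanish_above_bnd (LSsqrt a n)).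
rewrite -(sqrt_coef_sqr (g := fun j => coef a (n + n - j%:Z))) ?subr0 //.
apply: eq_bigr => -[i /= Hi] _; rewrite !ifT; try lia.
by congr (sqrt_coef _ _ * sqrt_coef _ _); lia.
Qed.

(** * Forms attaining every value *)

Lemma sqr_eq_mul_sqr (R : realDomainType) (c X Y : {poly R}) :
  c.[0] < 0 -> X * X = c * (Y * Y) -> Y = 0.
Proof.
move=> c0; have [k] := ubnP (size Y); elim: k X Y => // k IH X Y /ltnSE HY E.
have := congr1 (horner^~ 0) E; rewrite !hornerM => E0.
have sqr0 (x : R) : x * x <= 0 -> x = 0.
  by move=> Hx; apply/eqP; rewrite -[_ == 0]orbb -mulf_eq0 eq_le Hx sqr_ge0.
have Y0 : Y.[0] = 0 by apply: sqr0; nra.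
have X0 : X.[0] = 0 by apply: sqr0; rewrite E0 Y0; nra.
have factorX (P : {poly R}) : P.[0] = 0 -> exists P1, P = P1 * 'X.
  move=> P0; have /factor_theorem [P1 ->] : root P 0 by apply/eqP.
  by exists P1; rewrite polyC0 subr0.
have [X1 X1E] := factorX X X0; have [Y1 Y1E] := factorX Y Y0.
have [Y10|Y1nz] := eqVneq Y1 0; first by rewrite Y1E Y10 mul0r.
have E1 : X1 * X1 = c * (Y1 * Y1).
  have XX0 : 'X * 'X != 0 :> {poly R} by rewrite mulf_neq0 // polyX_eq0.
  apply: (mulIf XX0).
  have -> : X1 * X1 * ('X * 'X) = X * X by rewrite X1E; ring.
  by rewrite E Y1E; ring.
move: HY; rewrite Y1E size_mulX // => HY.
by move: Y1nz; rewrite (IH X1 Y1 HY E1) eqxx.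
Qed.

Definition pell (n : nat) : {poly rat} := 'X^(n + n) - 1.

Definition sqrt_pell (n : nat) : LS := LSsqrt (ofpoly (pell n)) n.

Lemma qval_sqrt_pell n (X Y : {poly rat}) :
  eqLS (LSmul (sqrt_pell n) (ofpoly (X * X - pell n * (Y * Y))))
       (qval (sqrt_pell n) (ofpoly 0) (LSopp (LSmul (sqrt_pell n) (ofpoly (pell n)))) X Y).
Proof.
pose N0 := (n + size X + size Y + size (pell n))%N.
have [bS bX bY bc] : [/\ bnd (sqrt_pell n) <= N0, bnd (ofpoly X) <= N0,
  bnd (ofpoly Y) <= N0 & bnd (ofpoly (pell n)) <= N0].
  by rewrite /N0 /=; split; lia.
apply: (@eqLS_LSrep N0 5) => K.
have [S rS] := @LSrep_exists N0 K 1 _ bS isT.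
have [X' rX] := @LSrep_exists N0 K 2 _ bX isT.
have [Y' rY] := @LSrep_exists N0 K 1 _ bY isT.
have [C rC] := @LSrep_exists N0 K 2 _ bc isT.
have r0 := @LSrep0 N0 K 2 _ coef_ofpoly0.
have rXX := LSrep_eqLS (LSmul_ofpoly _ _) (LSrepM rX rX).
have rYY := LSrep_eqLS (LSmul_ofpoly _ _) (LSrepM rY rY).
do 2 eexists; split.
- exact: (LSrepM rS (LSrep_eqLS (LSsub_ofpoly _ _)
           (LSrepD rXX (LSrepN (LSrep_eqLS (LSmul_ofpoly _ _) (LSrepM rC rYY)))))).
- exact: (LSrepD (LSrepD (LSrepM rS (LSrepM rX rX)) (LSrepM r0 (LSrepM rX rY)))
                 (LSrepM (LSrepN (LSrepM rS rC)) (LSrepM rY rY))).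
by rewrite (_ : _ - _ = 0) ?dvdp0 //; ring.
Qed.

Section Pell.

Variable n : nat.
Hypothesis n_gt0 : (0 < n)%N.

Lemma size_pell : size (pell n) = (n + n).+1.
Proof. by rewrite /pell -polyC1 size_XnsubC //; lia. Qed.

Lemma pell_neq0 : pell n != 0.
Proof. by rewrite -size_poly_eq0 size_pell. Qed.

Lemma pell_lead : (pell n)`_(n + n) = 1.
Proof. by rewrite /pell coefB coefXn coef1 eqxx (_ : (n + n == 0)%N = false) ?subr0 //; lia. Qed.

Lemma is_deg_pell : is_deg (ofpoly (pell n)) (Some (n%:Z + n%:Z)).
Proof. by have := is_deg_ofpoly pell_neq0; rewrite size_pell. Qed.

Lemma sqr_sqrt_pell : eqLS (LSmul (sqrt_pell n) (sqrt_pell n)) (ofpoly (pell n)).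
Proof.
case: is_deg_pell => _ Zc; apply: sqr_LSsqrt Zc _.
by rewrite (_ : _ + _ = (n + n)%N%:Z) // coef_ofpoly_nat pell_lead.
Qed.

Lemma pell_sqr_eq (X Y : {poly rat}) : X * X = pell n * (Y * Y) -> Y = 0.
Proof.
apply: sqr_eq_mul_sqr.
rewrite /pell !hornerE expr0n (_ : (n + n == 0)%N = false) ?add0r ?oppr_lt0 //; lia.
Qed.

Lemma sqrt_pell_notin_QT : ~ in_QT (sqrt_pell n).
Proof.
move=> [q [p [q0 E]]]; move/negP: q0; apply; apply/eqP.
apply: (@pell_sqr_eq p); apply: ofpoly_inj.
pose N0 := (n + size p + size q + size (pell n))%N.
have [bS bp bq bc] : [/\ bnd (sqrt_pell n) <= N0, bnd (ofpoly p) <= N0,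
  bnd (ofpoly q) <= N0 & bnd (ofpoly (pell n)) <= N0].
  by rewrite /N0 /=; split; lia.
apply: (@eqLS_LSrep N0 4) => K.
have [S rS] := @LSrep_exists N0 K 1 _ bS isT.
have [Q rQ] := @LSrep_exists N0 K 1 _ bq isT.
have [P rP] := @LSrep_exists N0 K 2 _ bp isT.
have [C rC] := @LSrep_exists N0 K 2 _ bc isT.
have QS_P := LSrep_dvdp (LSrep_eqLS E (LSrepM rQ rS)) rP.
have SS_C := LSrep_dvdp (LSrep_eqLS sqr_sqrt_pell (LSrepM rS rS)) rC.
exists (P * P), (C * (Q * Q)); split.
- exact: (LSrep_eqLS (LSmul_ofpoly _ _) (LSrepM rP rP)).
- exact: (LSrep_eqLS (LSmul_ofpoly _ _)
           (LSrepM rC (LSrep_eqLS (LSmul_ofpoly _ _) (LSrepM rQ rQ)))).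
rewrite (_ : _ - _ = - (Q * S + P) * (Q * S - P) + Q * Q * (S * S - C)); last by ring.
by rewrite dvdp_add ?dvdp_mull.
Qed.

Lemma disc_sqrt_pell :
  eqLS (LSmul (LSscale 2 (ofpoly (pell n))) (LSscale 2 (ofpoly (pell n))))
       (disc (sqrt_pell n) (ofpoly 0) (LSopp (LSmul (sqrt_pell n) (ofpoly (pell n))))).
Proof.
pose N0 := (n + size (pell n))%N.
have [bS bc] : bnd (sqrt_pell n) <= N0 /\ bnd (ofpoly (pell n)) <= N0.
  by rewrite /N0 /=; split; lia.
apply: (@eqLS_LSrep N0 4) => K.
have [S rS] := @LSrep_exists N0 K 1 _ bS isT.
have [C rC] := @LSrep_exists N0 K 2 _ bc isT.
have r0 := @LSrep0 N0 K 2 _ coef_ofpoly0.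
have SS_C := LSrep_dvdp (LSrep_eqLS sqr_sqrt_pell (LSrepM rS rS)) rC.
do 2 eexists; split.
- exact: (LSrepM (LSrepZ 2 rC) (LSrepZ 2 rC)).
- exact: (LSrepD (LSrepM r0 r0) (LSrepN (LSrepZ 4 (LSrepM rS (LSrepN (LSrepM rS rC)))))).
rewrite (_ : _ - _ = - (4%:P * C) * (S * S - C)); first exact: dvdp_mull.
by rewrite -!mul_polyC; ring.
Qed.

End Pell.

Lemma markov_spectrum_posnat n : (0 < n)%N -> markov_spectrum (Some n%:R).
Proof.
move=> n0; pose s := sqrt_pell n.
exists s, (ofpoly 0), (LSopp (LSmul s (ofpoly (pell n)))).
have HD := is_deg_eqLS (disc_sqrt_pell n0)
  (is_degM (is_degZ (c := 2) isT (is_deg_pell n0)) (is_degZ (c := 2) isT (is_deg_pell n0))).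
have HQ X Y : X * X - pell n * (Y * Y) != 0 ->
    is_deg (qval s (ofpoly 0) (LSopp (LSmul s (ofpoly (pell n)))) X Y)
           (Some (n%:Z + (size (X * X - pell n * (Y * Y))).-1%:Z)).
  move=> P0; apply: is_deg_eqLS (qval_sqrt_pell n X Y) _.
  exact: is_degM (is_deg_LSsqrt _ _) (is_deg_ofpoly P0).
split; first by case=> /(sqrt_pell_notin_QT n0).
split; first by split; [case: HD => D0 _; eexists; exact: D0 | eexists; exact: disc_sqrt_pell].
exists ((n%:Z + n%:Z) + (n%:Z + n%:Z)), n%:Z; split => //.
split; first by rewrite !intrD; field.
split.
  exists 1, 0; split; first by left; exact: oner_neq0.
  by have := HQ 1 0; rewrite !mulr0 subr0 mulr1 size_poly1 addr0; apply; exact: oner_neq0.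
move=> X Y XY0; have P0 : X * X - pell n * (Y * Y) != 0.
  rewrite subr_eq0; apply/eqP => E; have Y0 := pell_sqr_eq n0 E.
  move: E XY0; rewrite Y0 !mulr0 => /eqP; rewrite mulf_eq0 orbb => /eqP ->.
  by rewrite eqxx; case.
by eexists; split; [exact: HQ P0 | lia].
Qed.

Lemma markov_spectrum_infty : markov_spectrum None.
Proof.
have D1 : coef (ofpoly 1) 0 != 0 by rewrite /= coef1 oner_neq0.
have Z1 : vanish_above (ofpoly 1) 0.
  by have := vanish_above_ofpoly (leqnn (size (1 : {poly rat}))); rewrite size_poly1.
exists (ofpoly 0), (ofpoly 1), (sqrt_pell 1).
have Ed : eqLS (LSmul (ofpoly 1) (ofpoly 1)) (disc (ofpoly 0) (ofpoly 1) (sqrt_pell 1)).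
  move=> z; rewrite /disc coef_LSadd coef_LSopp coef_LSscale.
  by rewrite (@coef_LSmul0l (ofpoly 0) _ coef_ofpoly0) mulr0 oppr0 addr0.
split; first by case=> _ [_ /(sqrt_pell_notin_QT (isT : (0 < 1)%N))].
have D0 : coef (disc (ofpoly 0) (ofpoly 1) (sqrt_pell 1)) 0 != 0.
  by rewrite -Ed; have := coef_LSmul_top Z1 Z1; rewrite addr0 => ->; exact: mulf_neq0.
split; first by split; [exists 0 | exists (ofpoly 1)].
move=> k; exists 1, 0; split; first by left; exact: oner_neq0.
by move=> i _; rewrite coef_qvalX0 (@coef_LSmul0l (ofpoly 0) _ coef_ofpoly0).
Qed.

Theorem corollary3 (v : option rat) :
  markov_spectrum v <-> (v = None \/ exists n : nat, (0 < n)%N /\ v = Some n%:R).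
Proof.
split; last first.
  by case=> [-> | [n [n0 ->]]]; [exact: markov_spectrum_infty | exact: markov_spectrum_posnat].
case: v => [r [A [B [C [_ [AD Ar]]]]] | _]; last by left.
by right; have [n [n0 ->]] := markov_value_posnat AD Ar; exists n.
Qed.
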